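(* Consider a multivariate exponential family of pdfs or pmfs $$f(\boldsymbol{x},\boldsymbol{\theta})=v(\boldsymbol{x})\exp\big(\boldsymbol{\eta}(\boldsymbol{\theta})*\boldsymbol{u}(\boldsymbol{x})-\zeta(\boldsymbol{\theta})\big),\qquad\boldsymbol{\theta}\in\Theta,$$ where $\boldsymbol{x},\boldsymbol{\theta}$ are column vectors, $\boldsymbol{\eta}(\boldsymbol{\theta})$ and $\boldsymbol{u}(\boldsymbol{x})$ are column-vector functions, $\zeta(\boldsymbol{\theta})$ and $v(\boldsymbol{x})$ are scalar functions, $*$ denotes the inner product, and $\boldsymbol{\eta},\zeta$ are differentiable in $\boldsymbol{\theta}$. Let $\boldsymbol{X}_1,\dots,\boldsymbol{X}_n$ be i.i.d. random vectors with common pdf or pmf $f(\cdot,\boldsymbol{\theta})$, and let $\boldsymbol{Z}=\frac1n\sum_{i=1}^n\boldsymbol{u}(\boldsymbol{X}_i)$. For $\boldsymbol{\theta},\boldsymbol{\vartheta}\in\Theta$ and a vector $\boldsymbol{z}$ of the same size as $\boldsymbol{Z}$ define $\rho(\boldsymbol{z},\boldsymbol{\vartheta})=[\boldsymbol{\eta}(\boldsymbol{\theta})-\boldsymbol{\eta}(\boldsymbol{\vartheta})]*\boldsymbol{z}-\zeta(\boldsymbol{\theta})+\zeta(\boldsymbol{\vartheta})$, and let $\mathscr{A}_{\boldsymbol{\theta}}=\{\boldsymbol{\vartheta}\in\Theta:\boldsymbol{\eta}(\boldsymbol{\vartheta})\le\boldsymbol{\eta}(\boldsymbol{\theta})\}$,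 $\mathscr{B}_{\boldsymbol{\theta}}=\{\boldsymbol{\vartheta}\in\Theta:\boldsymbol{\eta}(\boldsymbol{\vartheta})\ge\boldsymbol{\eta}(\boldsymbol{\theta})\}$. Then $$\Pr\{\boldsymbol{Z}\le\boldsymbol{z}\mid\boldsymbol{\theta}\}\le\inf_{\boldsymbol{\vartheta}\in\mathscr{A}_{\boldsymbol{\theta}}}\exp(n\rho(\boldsymbol{z},\boldsymbol{\vartheta}))\Pr\{\boldsymbol{Z}\le\boldsymbol{z}\mid\boldsymbol{\vartheta}\}\le\inf_{\boldsymbol{\vartheta}\in\mathscr{A}_{\boldsymbol{\theta}}}\exp(n\rho(\boldsymbol{z},\boldsymbol{\vartheta})),$$ $$\Pr\{\boldsymbol{Z}\ge\boldsymbol{z}\mid\boldsymbol{\theta}\}\le\inf_{\boldsymbol{\vartheta}\in\mathscr{B}_{\boldsymbol{\theta}}}\exp(n\rho(\boldsymbol{z},\boldsymbol{\vartheta}))\Pr\{\boldsymbol{Z}\ge\boldsymbol{z}\mid\boldsymbol{\vartheta}\}\le\inf_{\boldsymbol{\vartheta}\in\mathscr{B}_{\boldsymbol{\theta}}}\exp(n\rho(\boldsymbol{z},\boldsymbol{\vartheta})).$$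
   Context: $\Pr\{E\mid\boldsymbol{\theta}\}$ denotes the probability of the event $E$ when the $\boldsymbol{X}_i$ are i.i.d. with pdf or pmf $f(\cdot,\boldsymbol{\theta})$. For vectors, $\boldsymbol{V}_1\le\boldsymbol{V}_2$ (resp. $\ge$) means componentwise inequality. *)

From HB Require Import structures.
From mathcomp Require Import all_boot all_order all_algebra.
From mathcomp Require Import all_classical all_reals all_analysis.
Set Implicit Arguments. Unset Strict Implicit. Unset Printing Implicit Defensive.
Import Order.TTheory GRing.Theory Num.Theory.
Import numFieldNormedType.Exports.
Local Open Scope classical_set_scope.
Local Open Scope ring_scope.

Definition dotv (R : pzRingType) (k : nat) (a b : 'cV[R]_k) : R :=
  \sum_(i < k) a i 0 * b i 0.

Definition leV (R : realDomainType) (k : nat) (a b : 'cV[R]_k) : bool :=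
  [forall i, a i 0 <= b i 0].

Definition expfam (R : realType) (T P : Type) (k : nat) (v : T -> R)
  (u : T -> 'cV[R]_k) (eta : P -> 'cV[R]_k) (zeta : P -> R) (x : T) (th : P) : R :=
  v x * expR (dotv (eta th) (u x) - zeta th).

Definition meanstat (R : realType) (T : Type) (k n : nat) (u : T -> 'cV[R]_k)
  (s : seq T) : 'cV[R]_k := n%:R^-1 *: \sum_(x <- s) u x.

(* n-fold iterated integral w.r.t. mu of a function of a sample of size n:
   integrates (x_1, ..., x_n) w.r.t. mu (x) ... (x) mu (Tonelli). *)
Fixpoint iter_integral (R : realType) (d : measure_display) (T : measurableType d)
  (mu : {measure set T -> \bar R}) (n : nat) (g : seq T -> \bar R) : \bar R :=
  match n with
  | 0 => g [::]
  | n'.+1 => (\int[mu]_x iter_integral mu n' (fun s => g (x :: s)))%E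
  end.

(* Pr{ E(X_1,...,X_n) | theta } when X_1,...,X_n are iid with density f(., theta)
   with respect to mu. *)
Definition prob_iid (R : realType) (d : measure_display) (T : measurableType d)
  (P : Type) (mu : {measure set T -> \bar R}) (n : nat) (f : T -> P -> R)
  (E : seq T -> bool) (th : P) : \bar R :=
  iter_integral mu n (fun s => ((E s)%:R * \prod_(x <- s) f x th)%:E).

Definition rho (R : realType) (P : Type) (k : nat) (eta : P -> 'cV[R]_k)
  (zeta : P -> R) (th : P) (z : 'cV[R]_k) (vth : P) : R :=
  dotv (eta th - eta vth) z - zeta th + zeta vth.

From HB Require Import structures.
From mathcomp Require Import all_boot all_order all_algebra.
From mathcomp Require Import all_classical all_reals all_analysis.
From mathcomp Require Import ring lra.
Import Order.TTheory GRing.Theory Num.Theory.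
Import numFieldNormedType.Exports.
Import HBNNSimple.
Local Open Scope classical_set_scope.
Local Open Scope ring_scope.

(* Change of measure.  For a sample s of size n the likelihood ratio of the
   exponential family is prod f(x, th) / prod f(x, vth) = exp(n rho(Z s, vth)),
   and on the event {Z <= z} (resp. {Z >= z}) with vth in A (resp. B) the
   exponent rho(Z s, vth) is at most rho(z, vth), because eta(th) - eta(vth)
   is componentwise nonnegative (resp. nonpositive).  Integrating this pointwise
   bound over the event gives the first inequality; the second one holds since
   any event has probability at most 1 under vth. *)

Section iterated_integral.
Local Open Scope ereal_scope.
Context d (T : measurableType d) (R : realType) (mu : {measure set T -> \bar R}).

(* The integrands met below are iterated integrals whose measurability is never
   established, so these two facts are proved from the definition of the
   integral of a nonnegative function as a supremum over simple functions. *)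

Lemma ge0_le_integral_nomeas (F G : T -> \bar R) :
  (forall x, 0 <= F x) -> (forall x, F x <= G x) ->
  \int[mu]_x F x <= \int[mu]_x G x.
Proof.
move=> F0 FG; have G0 x : 0 <= G x by exact: le_trans (F0 x) (FG x).
rewrite !ge0_integralTE//; apply: ge_ereal_sup => _ [h hF <-].
by apply: ereal_sup_ubound; exists h => //= x; exact: le_trans (hF x) (FG x).
Qed.

Lemma ge0_integralZl_le_nomeas (F : T -> \bar R) (c : R) :
  (0 <= c)%R -> (forall x, 0 <= F x) ->
  \int[mu]_x (c%:E * F x) <= c%:E * \int[mu]_x F x.
Proof.
move=> c0 F0; have [->|cn0] := eqVneq c 0%R.
  by rewrite mul0e; under eq_integral do rewrite mul0e; rewrite integral0.
have cgt0 : (0 < c)%R by rewrite lt_def cn0.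
have cF0 x : 0 <= c%:E * F x by rewrite mule_ge0.
rewrite !ge0_integralTE//; apply: ge_ereal_sup => _ [h hcF <-].
have invc0 : (0 <= c^-1)%R by rewrite invr_ge0.
pose h' := scale_nnsfun h invc0.
have -> : sintegral mu h = c%:E * sintegral mu h'.
  by rewrite sintegralrM muleA -EFinM divff// mul1e.
rewrite lee_pmul2l ?lte_fin//; apply: ereal_sup_ubound; exists h' => //= x.
by rewrite -(@lee_pmul2l _ c%:E) ?lte_fin// -EFinM mulrA divff// mul1r.
Qed.

Lemma iter_integral_ge0 n (g : seq T -> \bar R) :
  (forall s, 0 <= g s) -> 0 <= iter_integral mu n g.
Proof.
elim: n g => [|n IHn] g g0 /=; first exact: g0.
by apply: integral_ge0 => x _; exact: IHn.
Qed.

Lemma iter_integral_le_scale n (a b : seq T -> R) (c : R) :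
  (0 <= c)%R -> (forall s, 0 <= a s)%R -> (forall s, 0 <= b s)%R ->
  (forall s, size s = n -> a s <= c * b s)%R ->
  iter_integral mu n (fun s => (a s)%:E)
    <= c%:E * iter_integral mu n (fun s => (b s)%:E).
Proof.
move=> c0; elim: n a b => [|n IHn] a b a0 b0 ab /=.
  by rewrite -EFinM lee_fin; exact: ab.
apply: (@le_trans _ _ (\int[mu]_x (c%:E * iter_integral mu n
                                         (fun s => (b (x :: s))%:E)))).
  apply: ge0_le_integral_nomeas => x.
    by apply: iter_integral_ge0 => s; rewrite lee_fin.
  by apply: IHn => // s sn; apply: ab; rewrite /= sn.
by apply: ge0_integralZl_le_nomeas => // x; apply: iter_integral_ge0 => s;
  rewrite lee_fin.
Qed.

Lemma iter_integral_prod_le1 n (f : T -> R) :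
  (forall x, 0 <= f x)%R -> \int[mu]_x (f x)%:E = 1 ->
  iter_integral mu n (fun s => (\prod_(x <- s) f x)%:E) <= 1.
Proof.
move=> f0 f1; elim: n => [|n IHn] /=; first by rewrite big_nil.
have prod0 s : (0 <= \prod_(y <- s) f y)%R by rewrite prodr_ge0.
rewrite -f1; apply: ge0_le_integral_nomeas => x.
  by apply: iter_integral_ge0 => s; rewrite lee_fin.
apply: (@le_trans _ _ ((f x)%:E * iter_integral mu n
                                    (fun s => (\prod_(y <- s) f y)%:E))).
  by apply: iter_integral_le_scale => // s _; rewrite big_cons.
by rewrite -[leRHS]mule1 lee_wpmul2l ?lee_fin.
Qed.

Lemma prob_iid_le1 (P : Type) n (f : T -> P -> R) (E : seq T -> bool) th :
  (forall x, 0 <= f x th)%R -> \int[mu]_x (f x th)%:E = 1 ->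
  prob_iid mu n f E th <= 1.
Proof.
move=> f0 f1; have prod0 s : (0 <= \prod_(x <- s) f x th)%R by rewrite prodr_ge0.
apply: (@le_trans _ _ (1%:E * iter_integral mu n
                              (fun s => (\prod_(x <- s) f x th)%:E))).
  apply: iter_integral_le_scale => // s; first by rewrite mulr_ge0 ?ler0n.
  by case: (E s); rewrite ?mul0r ?mul1r.
by rewrite mul1e; exact: iter_integral_prod_le1.
Qed.

End iterated_integral.

Section inner_product.
Context {R : realType} {k : nat}.
Implicit Types a b c : 'cV[R]_k.

Lemma dotvDr a b c : dotv a (b + c) = dotv a b + dotv a c.
Proof. by rewrite /dotv -big_split; apply: eq_bigr => i _; rewrite mxE mulrDr. Qed.

Lemma dotvBl a b c : dotv (a - b) c = dotv a c - dotv b c.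
Proof. by rewrite /dotv -sumrB; apply: eq_bigr => i _; rewrite !mxE mulrBl. Qed.

Lemma dotv0r a : dotv a 0 = 0.
Proof. by rewrite /dotv big1 // => i _; rewrite mxE mulr0. Qed.

Lemma dotvZr a r b : dotv a (r *: b) = r * dotv a b.
Proof. by rewrite /dotv mulr_sumr; apply: eq_bigr => i _; rewrite mxE mulrCA. Qed.

Lemma dotv_ler2l a b c : leV 0 a -> leV b c -> dotv a b <= dotv a c.
Proof.
move=> /forallP a0 /forallP bc; apply: ler_sum => i _.
by apply: ler_wpM2l; [have := a0 i; rewrite mxE | exact: bc].
Qed.

Lemma leV_subr_ge0 a b : leV a b -> leV 0 (b - a).
Proof. by move=> /forallP ab; apply/forallP => i; rewrite !mxE subr_ge0. Qed.

End inner_product.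

Section exponential_family.
Context {R : realType} {T : Type} {k m : nat}.
Variables (v : T -> R) (u : T -> 'cV[R]_k).
Variables (eta : 'cV[R]_m -> 'cV[R]_k) (zeta : 'cV[R]_m -> R).

Lemma prod_expfam_ratio (s : seq T) th vth :
  \prod_(x <- s) expfam v u eta zeta x th =
  expR (dotv (eta th - eta vth) (\sum_(x <- s) u x)
        + (size s)%:R * (zeta vth - zeta th))
  * \prod_(x <- s) expfam v u eta zeta x vth.
Proof.
elim: s => [|x s IHs]; first by rewrite !big_nil dotv0r mul0r addr0 expR0 mulr1.
rewrite !big_cons IHs dotvDr /= /expfam.
set D := dotv (eta th - eta vth) (\sum_(y <- s) u y).
set Q := \prod_(y <- s) _.
have tilt : expR (dotv (eta th) (u x) - zeta th)
            * expR (D + (size s)%:R * (zeta vth - zeta th))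
  = expR (dotv (eta th - eta vth) (u x) + D + (size s).+1%:R * (zeta vth - zeta th))
    * expR (dotv (eta vth) (u x) - zeta vth).
  by rewrite -!expRD; congr expR; rewrite dotvBl -addn1 natrD; ring.
transitivity (v x * (expR (dotv (eta th) (u x) - zeta th)
                    * expR (D + (size s)%:R * (zeta vth - zeta th))) * Q).
  by ring.
by rewrite tilt; ring.
Qed.

Lemma prod_expfam_meanstat n (s : seq T) th vth : (0 < n)%N -> size s = n ->
  \prod_(x <- s) expfam v u eta zeta x th =
  expR (n%:R * rho eta zeta th (meanstat n u s) vth)
  * \prod_(x <- s) expfam v u eta zeta x vth.
Proof.
move=> n0 sn; rewrite (prod_expfam_ratio _ _ vth) sn; congr (expR _ * _).
have nR : (n%:R : R) != 0 by rewrite pnatr_eq0 -lt0n.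
by rewrite /rho /meanstat dotvZr !mulrDr mulrA divff // mul1r; ring.
Qed.

Lemma rho_le_A th vth y z : leV (eta vth) (eta th) -> leV y z ->
  rho eta zeta th y vth <= rho eta zeta th z vth.
Proof.
by move=> /leV_subr_ge0 eta_le yz; rewrite /rho !lerD2r dotv_ler2l.
Qed.

Lemma rho_le_B th vth y z : leV (eta th) (eta vth) -> leV z y ->
  rho eta zeta th y vth <= rho eta zeta th z vth.
Proof.
move=> /leV_subr_ge0 eta_le zy; rewrite /rho !lerD2r.
by have := dotv_ler2l _ _ _ eta_le zy; rewrite !dotvBl; lra.
Qed.

End exponential_family.

Lemma le_ereal_inf_image (R : realType) (I : Type) (S : set I)
    (g h : I -> \bar R) :
  (forall i, S i -> (g i <= h i)%E) ->
  (ereal_inf (g @` S) <= ereal_inf (h @` S))%E.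
Proof.
move=> gh; apply: le_ereal_inf_tmp => _ [i Si <-].
by apply: ge_ereal_inf; exists (g i); [exists i | exact: gh].
Qed.

Section tilting.
Local Open Scope ereal_scope.
Context d (T : measurableType d) (R : realType) (mu : {measure set T -> \bar R}).
Context (k m : nat) (v : T -> R) (u : T -> 'cV[R]_k).
Context (eta : 'cV[R]_m -> 'cV[R]_k) (zeta : 'cV[R]_m -> R).
Hypothesis v_ge0 : forall x, (0 <= v x)%R.

Let f := expfam v u eta zeta.

Let f_ge0 x th : (0 <= f x th)%R.
Proof. by rewrite /f /expfam mulr_ge0 ?expR_ge0. Qed.

Lemma prob_iid_expfam_le_tilted n (E : seq T -> bool) th vth z :
  (0 < n)%N ->
  (forall s, size s = n -> E s ->
     (rho eta zeta th (meanstat n u s) vth <= rho eta zeta th z vth)%R) ->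
  prob_iid mu n f E th
    <= (expR (n%:R * rho eta zeta th z vth))%:E * prob_iid mu n f E vth.
Proof.
move=> n0 rho_le; have prod0 s p : (0 <= \prod_(x <- s) f x p)%R.
  by rewrite prodr_ge0.
apply: iter_integral_le_scale => [|s|s|s sn]; rewrite ?expR_ge0 ?mulr_ge0 //.
case Es: (E s); last by rewrite !mul0r mulr0.
rewrite !mul1r [X in (X <= _)%R](prod_expfam_meanstat _ _ _ _ _ _ _ vth n0 sn).
by rewrite ler_wpM2r // ler_expR ler_wpM2l ?ler0n ?rho_le.
Qed.

Lemma prob_iid_expfam_tilted_bounds n (E : seq T -> bool) (S : set 'cV[R]_m)
    th z :
  (0 < n)%N ->
  (forall vth, S vth -> \int[mu]_x (f x vth)%:E = 1) ->
  (forall vth s, S vth -> size s = n -> E s ->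
     (rho eta zeta th (meanstat n u s) vth <= rho eta zeta th z vth)%R) ->
  let w vth := expR (n%:R * rho eta zeta th z vth) in
  prob_iid mu n f E th
    <= ereal_inf [set (w vth)%:E * prob_iid mu n f E vth | vth in S] /\
  ereal_inf [set (w vth)%:E * prob_iid mu n f E vth | vth in S]
    <= ereal_inf [set (w vth)%:E | vth in S].
Proof.
move=> n0 f1 rho_le w; split.
  apply: le_ereal_inf_tmp => _ [vth Svth <-].
  by apply: prob_iid_expfam_le_tilted => // s; exact: rho_le.
apply: le_ereal_inf_image => vth Svth.
rewrite -[leRHS]mule1 lee_wpmul2l ?lee_fin ?expR_ge0 //.
exact: prob_iid_le1 (f1 _ Svth).
Qed.

End tilting.

Theorem theorem4 (R : realType) (d : measure_display) (T : measurableType d)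
  (mu : {measure set T -> \bar R}) (k m : nat) (Theta : set 'cV[R]_m)
  (v : T -> R) (u : T -> 'cV[R]_k) (eta : 'cV[R]_m -> 'cV[R]_k)
  (zeta : 'cV[R]_m -> R) (n : nat) :
  (0 < n)%N ->
  (forall x, 0 <= v x) ->
  measurable_fun setT v ->
  (forall i, measurable_fun setT (fun x => u x i 0)) ->
  (forall th, Theta th -> differentiable eta th /\ differentiable zeta th) ->
  (forall th, Theta th ->
     (\int[mu]_x (expfam v u eta zeta x th)%:E = 1)%E) ->
  forall (th : 'cV[R]_m) (z : 'cV[R]_k), Theta th ->
  let f := expfam v u eta zeta in
  let Z := meanstat n u in
  let A := [set vth | Theta vth /\ leV (eta vth) (eta th)] in
  let B := [set vth | Theta vth /\ leV (eta th) (eta vth)] in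
  let PrLe := prob_iid mu n f (fun s => leV (Z s) z) in
  let PrGe := prob_iid mu n f (fun s => leV z (Z s)) in
  let w := fun vth => expR (n%:R * rho eta zeta th z vth) in
  ((PrLe th <= ereal_inf [set (w vth)%:E * PrLe vth | vth in A])%E /\
   (ereal_inf [set (w vth)%:E * PrLe vth | vth in A]
      <= ereal_inf [set (w vth)%:E | vth in A])%E) /\
  ((PrGe th <= ereal_inf [set (w vth)%:E * PrGe vth | vth in B])%E /\
   (ereal_inf [set (w vth)%:E * PrGe vth | vth in B]
      <= ereal_inf [set (w vth)%:E | vth in B])%E).
Proof.
move=> n0 v0 _ _ _ f1 th z _ f Z A B PrLe PrGe w.
split; apply: prob_iid_expfam_tilted_bounds => // vth.
- by case=> Theta_vth _; exact: f1.
- by move=> s [_ eta_le] _; exact: rho_le_A.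
- by case=> Theta_vth _; exact: f1.
- by move=> s [_ eta_le] _; exact: rho_le_B.
Qed.
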